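(* For every claw-free cubic graph $G$, $\nu_2(G) \geq \frac{5}{6}\cdot |V(G)|$.
   Context: Graphs are finite, without loops, possibly with multiple edges; a graph is cubic if every vertex has degree $3$, and claw-free if it has no induced subgraph isomorphic to $K_{1,3}$. For $k\geq 1$, $\nu_k(G)$ is the maximum number of edges of a $k$-edge-colorable subgraph of $G$. *)

(* Parallel edges are allowed (distinct edges with the same endpoints). *)
From mathcomp Require Import all_boot.
Set Implicit Arguments. Unset Strict Implicit. Unset Printing Implicit Defensive.

Section Multigraph.
Variables (V E : finType) (src dst : E -> V).

Definition loopless : Prop := forall e : E, src e != dst e.

Definition incident (e : E) (v : V) : bool := (src e == v) || (dst e == v).

Definition degree (v : V) : nat := #|[set e : E | incident e v]|.

Definition cubic : Prop := forall v : V, degree v = 3.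

Definition adj (u w : V) : bool :=
  [exists e : E, ((src e == u) && (dst e == w)) || ((src e == w) && (dst e == u))].

(* G contains an induced claw K_{1,3}: a centre v with three distinct,
   pairwise non-adjacent neighbours a b c (each joined to v by exactly one edge,
   so that the induced subgraph on {v,a,b,c} is exactly K_{1,3}). *)
Definition edge_mult (u w : V) : nat :=
  #|[set e : E | ((src e == u) && (dst e == w)) || ((src e == w) && (dst e == u))]|.

Definition has_induced_claw : Prop :=
  exists v a b c : V,
    [/\ a != b, a != c, b != c,
        [/\ edge_mult v a = 1, edge_mult v b = 1 & edge_mult v c = 1] &
        [/\ ~~ adj a b, ~~ adj a c & ~~ adj b c]].

Definition claw_free : Prop := ~ has_induced_claw.

Definition edges_adjacent (e f : E) : bool :=
  (e != f) && [|| incident f (src e) | incident f (dst e)].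

Definition k_edge_colorable (k : nat) (F : {set E}) : bool :=
  [exists c : {ffun E -> 'I_k},
    [forall e : E, forall f : E,
       [&& e \in F, f \in F & edges_adjacent e f] ==> (c e != c f)]].

(* nu_k(G): maximum number of edges of a k-edge-colourable subgraph.
   (Edge-sets suffice: isolated vertices do not affect colourability.) *)
Definition nu (k : nat) : nat :=
  \max_(F : {set E} | k_edge_colorable k F) #|F|.

End Multigraph.

(* A connected claw-free graph with at least two vertices has an edge yz whose
   removal leaves it connected: choose an edge yz and a connected C disjoint from
   it with |C| maximal; maximality forces every other vertex to be adjacent to
   y or z only, and the claw centred there gives a contradiction.  Peeling off
   such edges proves Sumner's theorem: a claw-free graph all of whose unions of
   components have even order has a perfect matching.  In a cubic graph
   3|A| = 2|E(A)| for every union of components A, so G has a perfect matching M.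
   Extend M to a maximal subgraph F of maximum degree 2; colouring M and F \ M
   differently is proper.  By maximality every edge outside F has an endpoint of
   F-degree 2, which carries no other edge outside F, so
   |E \ F| <= #{v | d_F v = 2} <= 2|F| - |V|, and 2|E| = 3|V| gives 5|V| <= 6|F|. *)

From mathcomp Require Import all_boot zify.
Set Implicit Arguments. Unset Strict Implicit. Unset Printing Implicit Defensive.

Lemma card_set_sum (T : finType) (P : pred T) : #|[set x | P x]| = \sum_x P x.
Proof. by rewrite -sum1dep_card big_mkcond; apply: eq_bigr => x _; case: (P x). Qed.

Section ClawFreeMatching.
Variables (V : finType) (R : rel V).
Hypothesis Rsym : symmetric R.
Hypothesis Rirr : irreflexive R.
Hypothesis Rclaw : forall v a b c, R v a -> R v b -> R v c ->
  a != b -> a != c -> b != c -> [|| R a b, R a c | R b c].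

Implicit Types (S A B C : {set V}).

(* [isolated S A]: A is a union of connected components of the subgraph induced by S. *)
Definition isolated S A : bool := [forall a in A, forall b in S :\: A, ~~ R a b].

Definition connected S : bool :=
  [forall A : {set V}, (A \subset S) && isolated S A ==> (A == set0) || (A == S)].

Lemma isolatedP S A :
  reflect (forall a b, a \in A -> b \in S :\: A -> ~~ R a b) (isolated S A).
Proof.
apply: (iffP forall_inP) => [H a b aA bSA | H a aA].
  exact: (forall_inP (H a aA)).
by apply/forall_inP => b; apply: H.
Qed.

Lemma connectedP S :
  reflect (forall A, A \subset S -> isolated S A -> A = set0 \/ A = S) (connected S).
Proof.
apply: (iffP forallP) => [H A sAS iA | H A].
  by move/implyP: (H A); rewrite sAS iA => /(_ isT) /orP [] /eqP; [left | right].
by apply/implyP => /andP [sAS iA]; case: (H A sAS iA) => ->; rewrite eqxx ?orbT.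
Qed.

Lemma connected_edge S A : connected S -> A \subset S -> A != set0 -> A != S ->
  exists a b, [/\ a \in A, b \in S :\: A & R a b].
Proof.
move/connectedP => cS sAS /negbTE A0 /negbTE AS.
have : ~~ isolated S A by apply/negP => /(cS A sAS) [] /eqP; rewrite ?A0 ?AS.
rewrite negb_forall_in => /exists_inP [a aA]; rewrite negb_forall_in.
by case/exists_inP => b bSA; rewrite negbK => Rab; exists a, b.
Qed.

Lemma connected0 : connected set0.
Proof. by apply/connectedP => A; rewrite subset0 => /eqP ->; left. Qed.

Lemma connected1 x : connected [set x].
Proof.
by apply/connectedP => A; rewrite subset1 => /orP [] /eqP ->; [right | left].
Qed.

Lemma connectedU1 C x : connected C -> x \notin C ->
  (C = set0 \/ exists2 c, c \in C & R x c) -> connected (x |: C).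
Proof.
move/connectedP => Cconn xC xC_touch; apply/connectedP => A sA /isolatedP iA.
have sA' : A :\ x \subset C.
  by apply/subsetP => a; rewrite !inE => /andP [ax /(subsetP sA)]; rewrite !inE (negbTE ax).
have iA' : isolated C (A :\ x).
  apply/isolatedP => a b; rewrite !inE => /andP [_ aA] /andP [bAx bC].
  have bx : b != x by apply: contraNneq xC => <-.
  by apply: (iA _ _ aA); rewrite !inE bC orbT andbT; move: bAx; rewrite bx.
case: (Cconn _ sA' iA') => [A0 | AC].
- have sAx : A \subset [set x].
    apply/subsetP => a aA; rewrite inE; apply/negPn/negP => ax.
    by move/setP: A0 => /(_ a); rewrite !inE ax aA.
  move: sAx; rewrite subset1 => /orP [] /eqP Ax; last by left.
  case: xC_touch => [C0 | [c cC Rxc]]; first by right; rewrite C0 setU0.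
  have cx : c != x by apply: contraNneq xC => <-.
  by move: (iA x c); rewrite Ax !inE eqxx cC (negbTE cx) Rxc => /(_ isT isT).
- case: (boolP (x \in A)) => xA.
    by right; apply/eqP; rewrite eqEsubset sA subUset sub1set xA -AC subsetDl.
  case: xC_touch => [C0 | [c cC Rxc]].
    left; apply/eqP; rewrite -subset0; apply/subsetP => a aA.
    by move: (subsetP sA a aA); rewrite C0 setU0 inE => /eqP ax; rewrite -ax aA in xA.
  have cA : c \in A by move: cC; rewrite -AC inE => /andP [].
  by move: (iA c x cA); rewrite !inE eqxx xA Rsym Rxc => /(_ isT).
Qed.

Definition admissible S y z C :=
  [&& y \in S, z \in S, R y z, C \subset S :\: [set y; z] & connected C].

Lemma admissible_sym S y z C : admissible S y z C = admissible S z y C.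
Proof. by rewrite /admissible Rsym setUC andbCA. Qed.

Section MaximalComponent.
Variables (S C : {set V}).
Hypothesis Sconn : connected S.
Hypothesis Cmax : forall y z C', admissible S y z C' -> #|C'| <= #|C|.

Lemma max_component_grow y z x : admissible S y z (x |: C) -> x \in C.
Proof. by move/Cmax; rewrite cardsU1; case: (x \in C) => //=; rewrite add1n ltnn. Qed.

Section FixedEdge.
Variables y z : V.
Hypothesis yzC : admissible S y z C.

Let yS : y \in S. Proof. by case/and5P: yzC. Qed.
Let zS : z \in S. Proof. by case/and5P: yzC. Qed.
Let Ryz : R y z. Proof. by case/and5P: yzC. Qed.
Let Cconn : connected C. Proof. by case/and5P: yzC. Qed.

Let memC c : c \in C -> [/\ c \in S, c != y & c != z].
Proof.
case/and5P: yzC => _ _ _ /subsetP sC _ /sC.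
by rewrite !inE negb_or => /andP [/andP [-> ->] ->].
Qed.

Let sub_outside u v : u \notin C -> v \notin C -> C \subset S :\: [set u; v].
Proof.
move=> uC vC; apply/subsetP => c cC; have [cS _ _] := memC cC.
rewrite !inE negb_or cS andbT.
by apply/andP; split; [apply: contraNneq uC | apply: contraNneq vC] => <-.
Qed.

Let yC : y \notin C. Proof. by apply/negP => /memC [_ /eqP]. Qed.
Let zC : z \notin C. Proof. by apply/negP => /memC [_ _ /eqP]. Qed.

Lemma max_component_outsideP d :
  reflect [/\ d \in S, d \notin C, d != y & d != z] (d \in S :\: (C :|: [set y; z])).
Proof.
by rewrite !inE !negb_or andbC; apply: and4P.
Qed.

Lemma max_component_isolated : isolated (S :\: [set y; z]) C.
Proof.
apply/isolatedP => a b aC; rewrite !inE negb_or => /andP [bC /andP [/andP [bny bnz] bS]].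
apply/negP => Rab; suff : b \in C by rewrite (negbTE bC).
apply: (max_component_grow (y := y) (z := z)); apply/and5P; split => //.
- by rewrite subUset sub1set !inE negb_or bny bnz bS; case/and5P: yzC.
- by apply: (connectedU1 Cconn bC); right; exists a; rewrite // Rsym.
Qed.

Lemma max_component_attached : C != set0 ->
  exists c o, [/\ c \in C, o \in [set y; z] & R c o].
Proof.
move=> C0; have CS : C \subset S by apply/subsetP => c /memC [].
have [|c [o [cC oSC Rco]]] := connected_edge Sconn CS C0.
  by apply: contraNneq yC => ->.
exists c, o; split=> //; apply: contraTT Rco => oyz.
case/setDP: oSC => oS oC; apply: (isolatedP _ _ max_component_isolated) => //.
by rewrite !in_setD oyz oS oC.
Qed.

Lemma max_component_connectedU : connected (C :|: [set y; z]).
Proof.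
have yz : y != z by apply: contraTneq Ryz => ->; rewrite Rirr.
case: (eqVneq C set0) => [-> | C0].
  rewrite set0U; apply: (connectedU1 (connected1 z)); first by rewrite inE.
  by right; exists z; rewrite // !inE eqxx.
have [c [o [cC oyz Rco]]] := max_component_attached C0.
have oC : o \notin C by case/set2P: oyz => ->.
have connoC : connected (o |: C).
  by apply: (connectedU1 Cconn oC); right; exists c; rewrite // Rsym.
case/set2P: oyz => eo; subst o.
- have -> : C :|: [set y; z] = z |: (y |: C).
    by apply/setP => v; rewrite !inE; case: (v \in C); case: (v == y); case: (v == z).
  apply: (connectedU1 connoC); first by rewrite !inE negb_or zC eq_sym yz.
  by right; exists y; [rewrite !inE eqxx | rewrite Rsym].
- have -> : C :|: [set y; z] = y |: (z |: C).
    by apply/setP => v; rewrite !inE; case: (v \in C); case: (v == y); case: (v == z).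
  apply: (connectedU1 connoC); first by rewrite !inE negb_or yC yz.
  by right; exists z; rewrite // !inE eqxx.
Qed.

Lemma max_component_outside_independent d1 d2 :
  d1 \in S :\: (C :|: [set y; z]) -> d2 \in S :\: (C :|: [set y; z]) -> ~~ R d1 d2.
Proof.
move=> /max_component_outsideP [d1S d1C d1y d1z] /max_component_outsideP [d2S d2C d2y d2z].
apply/negP => R12.
suff /Cmax : admissible S d1 d2 (C :|: [set y; z]).
  apply/negP; rewrite -ltnNge; apply: proper_card; rewrite properE subsetUl /=.
  by apply/subsetPn; exists y; rewrite ?yC // !inE eqxx orbT.
apply/and5P; split=> //; last exact: max_component_connectedU.
rewrite subUset sub_outside //= subUset !sub1set !inE !negb_or yS zS.
by rewrite ![_ == d1]eq_sym ![_ == d2]eq_sym d1y d1z d2y d2z.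
Qed.

Lemma max_component_no_neighbour d : d \in S :\: (C :|: [set y; z]) -> ~~ R d y.
Proof.
move=> /max_component_outsideP [dS dC dy dz]; apply/negP => Rdy.
have dyz : d \in (S :\: [set y; z]) :\: C by rewrite !inE negb_or dy dz dS dC.
have grow u v x : R u v -> u \in S -> v \in S -> x \in S :\: [set u; v] ->
    u \notin C -> v \notin C -> x \notin C ->
    (C = set0 \/ exists2 c, c \in C & R x c) -> False.
  move=> Ruv uS vS xS uC vC xC touch; suff : x \in C by rewrite (negbTE xC).
  apply: (max_component_grow (y := u) (z := v)); apply/and5P; split=> //.
    by rewrite subUset sub1set xS (sub_outside uC vC).
  exact: connectedU1 Cconn xC touch.
have zdy : z \in S :\: [set d; y].
  by rewrite !inE negb_or zS eq_sym dz /= andbT; apply: contraTneq Ryz => ->; rewrite Rirr.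
case: (eqVneq C set0) => [C0 | C0].
  by apply: (grow d y z) => //; left.
case: (boolP [exists c in C, R z c]) => [/exists_inP [c cC Rzc] | /exists_inPn zC_none].
  by apply: (grow d y z) => //; right; exists c.
have [c [o [cC oyz Rco]]] := max_component_attached C0.
have Rcy : R c y.
  by case/set2P: oyz Rco => -> // Rcz; move: (zC_none c cC); rewrite Rsym Rcz.
have cd : c != d by apply: contraNneq dC => <-.
case: (boolP (R d z)) => Rdz.
  apply: (grow d z y) => //; last by right; exists c; rewrite // Rsym.
  by rewrite !inE negb_or yS eq_sym dy andbT; apply: contraTneq Ryz => ->; rewrite Rirr.
have zc : z != c by apply: contraNneq zC => ->.
have zd : z != d by rewrite eq_sym.
have dc : d != c by rewrite eq_sym.
rewrite Rsym in Rdy; rewrite Rsym in Rcy.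
case/or3P: (Rclaw Ryz Rdy Rcy zd zc dc) => [Rzd | Rzc | Rdc].
- by rewrite Rsym Rzd in Rdz.
- by rewrite (negbTE (zC_none c cC)) in Rzc.
- by move: (isolatedP _ _ max_component_isolated c d cC dyz); rewrite Rsym Rdc.
Qed.
End FixedEdge.

Lemma max_component_complete y z : admissible S y z C -> S :\: [set y; z] = C.
Proof.
move=> yzC; case/and5P: (yzC) => yS _ _ sC _.
apply/eqP; rewrite eqEsubset sC andbT; apply/subsetP => d dSyz; apply/negPn/negP => dC.
have dD : d \in S :\: (C :|: [set y; z]) by move: dSyz; rewrite !inE (negbTE dC).
have /max_component_outsideP [dS _ dy _] := dD.
have [|||a [b [/set1P -> bSd Rdb]]] := connected_edge Sconn (A := [set d]).
- by rewrite sub1set.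
- by apply/set0Pn; exists d; rewrite inE.
- by apply: contraNneq dy => dSS; move: yS; rewrite -dSS inE eq_sym.
case/setDP: bSd => bS bd; case: (boolP (b \in C)) => bC.
  have dCout : d \in (S :\: [set y; z]) :\: C by rewrite inE dC dSyz.
  by move: (isolatedP _ _ (max_component_isolated yzC) b d bC dCout); rewrite Rsym Rdb.
case: (boolP (b \in [set y; z])) => [/set2P [] eb | byz]; try subst b.
- by move: (max_component_no_neighbour yzC dD); rewrite Rdb.
- rewrite admissible_sym in yzC; rewrite (setUC [set y]) in dD.
  by move: (max_component_no_neighbour yzC dD); rewrite Rdb.
- have bD : b \in S :\: (C :|: [set y; z]).
    by rewrite !inE negb_or bC bS; move: byz; rewrite !inE => ->.
  by move: (max_component_outside_independent yzC dD bD); rewrite Rdb.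
Qed.
End MaximalComponent.

Lemma connected_nonseparating_edge S : connected S -> 1 < #|S| ->
  exists y z, [/\ y \in S, z \in S, R y z & connected (S :\: [set y; z])].
Proof.
move=> Sconn /card_gt1P [a [b [aS bS ab]]].
have [|||_ [c [/set1P -> cSa Rac]]] := connected_edge Sconn (A := [set a]).
- by rewrite sub1set.
- by apply/set0Pn; exists a; rewrite inE.
- by apply: contraNneq ab => aSS; move: bS; rewrite -aSS inE eq_sym.
have adm0 : admissible S a c set0.
  by case/setDP: cSa => cS _; rewrite /admissible aS cS Rac sub0set connected0.
case: (@arg_maxnP _ (a, c, set0) (fun t => admissible S t.1.1 t.1.2 t.2)
         (fun t => #|t.2|) adm0) => [[[y z] C] /= yzC Cmax].
exists y, z; case/and5P: (yzC) => yS zS Ryz _ Cconn; split=> //.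
rewrite (max_component_complete Sconn _ yzC) // => y' z' C' adm'.
exact: (Cmax (y', z', C')).
Qed.

Lemma isolated_trans S A B : isolated S A -> B \subset A -> isolated A B -> isolated S B.
Proof.
move=> /isolatedP iA sBA /isolatedP iB; apply/isolatedP => a b aB /setDP [bS bB].
case: (boolP (b \in A)) => bA; first by apply: iB; rewrite ?inE ?bB.
by apply: iA; rewrite ?inE ?bA ?(subsetP sBA).
Qed.

Lemma isolated_transD S A B :
  isolated S A -> B \subset S :\: A -> isolated (S :\: A) B -> isolated S B.
Proof.
move=> /isolatedP iA sB /isolatedP iB; apply/isolatedP => a b aB /setDP [bS bB].
have /setDP [aS aA] := subsetP sB a aB.
case: (boolP (b \in A)) => bA; last by apply: iB; rewrite ?inE ?bA ?bB.
by rewrite Rsym; apply: iA; rewrite ?inE ?aA.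
Qed.

Definition matching_on S (p : V -> V) :=
  forall v, v \in S -> [/\ p v \in S, R v (p v) & p (p v) = v].

Lemma matching_on_glue S A p q : A \subset S ->
  matching_on A p -> matching_on (S :\: A) q ->
  matching_on S (fun v => if v \in A then p v else q v).
Proof.
move=> sAS pA qSA v vS; case: (boolP (v \in A)) => vA.
  by have [pvA Rvp ->] := pA v vA; rewrite pvA (subsetP sAS).
have /qSA [/setDP [qvS qvA] Rvq ->] : v \in S :\: A by rewrite inE vA.
by rewrite (negbTE qvA).
Qed.

Lemma matching_on_add_edge S y z p : y \in S -> z \in S -> R y z ->
  matching_on (S :\: [set y; z]) p ->
  matching_on S (fun v => if v == y then z else if v == z then y else p v).
Proof.
move=> yS zS Ryz pS v vS.
have zy : z != y by apply: contraTneq Ryz => ->; rewrite Rirr.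
case: (eqVneq v y) => [-> | vy]; first by rewrite eqxx (negbTE zy) zS Ryz.
case: (eqVneq v z) => [-> | vz]; first by rewrite eqxx yS Rsym Ryz.
have /pS [] : v \in S :\: [set y; z] by rewrite !inE negb_or vy vz vS.
by rewrite !inE negb_or => /andP [/andP [/negbTE -> /negbTE ->] ->] Rvp ->.
Qed.

Theorem sumner_matching S : (forall A, A \subset S -> isolated S A -> ~~ odd #|A|) ->
  exists p, matching_on S p.
Proof.
have [n] := ubnP #|S|; elim: n S => // n IH S /ltnSE Sn Sev.
case: (boolP (connected S)) => Sconn; last first.
  move: Sconn; rewrite negb_forall => /existsP [A]; rewrite negb_imply negb_or.
  case/andP=> /andP [sAS iA] /andP [A0 AS].
  have [p pA] : exists p, matching_on A p.
    apply: IH.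
    - by apply: leq_trans Sn; apply: proper_card; rewrite properEneq AS.
    - by move=> B sBA iB; apply: Sev (isolated_trans iA sBA iB); apply: subset_trans sAS.
  have [q qSA] : exists q, matching_on (S :\: A) q.
    apply: IH.
    - apply: leq_trans Sn; apply: proper_card; rewrite properEneq subsetDl andbT.
      apply: contraNneq A0 => SAS; apply/eqP/setP => a; rewrite inE.
      by apply/negP => aA; move: (subsetP sAS a aA); rewrite -SAS inE aA.
    - move=> B sB iB; apply: Sev (isolated_transD iA sB iB).
      exact: subset_trans sB (subsetDl _ _).
  by exists (fun v => if v \in A then p v else q v); apply: matching_on_glue.
case: (eqVneq S set0) => [-> | S0]; first by exists id => v; rewrite inE.
have Seven : ~~ odd #|S|.
  by apply: Sev (subxx S) _; apply/isolatedP => a b _; rewrite setDv inE.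
have S2 : 1 < #|S| by move: Seven S0; rewrite -card_gt0; case: #|S| => [|[|m]].
have [y [z [yS zS Ryz S'conn]]] := connected_nonseparating_edge Sconn S2.
have yz : y != z by apply: contraTneq Ryz => ->; rewrite Rirr.
have cardS' : #|S :\: [set y; z]| = #|S| - 2.
  by rewrite cardsD (setIidPr _) ?cards2 ?yz // subUset !sub1set yS zS.
have [p pS'] : exists p, matching_on (S :\: [set y; z]) p.
  apply: IH => [|A sA iA]; first by rewrite cardS'; lia.
  by case: (connectedP _ S'conn A sA iA) => ->; rewrite ?cards0 // cardS' oddB // (negbTE Seven).
by exists (fun v => if v == y then z else if v == z then y else p v); apply: matching_on_add_edge.
Qed.
End ClawFreeMatching.

Section CubicClawFree.
Variables (V E : finType) (src dst : E -> V).
Hypothesis src_dst : loopless src dst.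
Hypothesis deg3 : cubic src dst.
Hypothesis clawfree : claw_free src dst.

Local Notation incident := (incident src dst).
Local Notation adj := (adj src dst).
Implicit Types (F M : {set E}) (A : {set V}).

Definition degree_in (F : {set E}) v := #|[set e in F | incident e v]|.

Lemma adj_sym : symmetric adj.
Proof. by move=> u w; apply/existsP/existsP => -[e He]; exists e; rewrite orbC. Qed.

Lemma adj_irr : irreflexive adj.
Proof.
move=> v; apply/negbTE/existsP => -[e]; rewrite orbb => /andP [/eqP s /eqP d].
by move: (src_dst e); rewrite s d eqxx.
Qed.

Lemma handshake (A : {set V}) (F : {set E}) :
  \sum_(v in A) degree_in F v = \sum_(e in F) ((src e \in A) + (dst e \in A)).
Proof.
under eq_bigr => v _ do rewrite /degree_in card_set_sum.
rewrite exchange_big [RHS]big_mkcond; apply: eq_bigr => e _.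
case: (boolP (e \in F)) => eF /=; last by rewrite big1.
have sum_eq x : \sum_(v in A) (x == v : nat) = (x \in A).
  case: (boolP (x \in A)) => xA.
    by rewrite (bigD1 x) //= eqxx big1 // => v /andP [_ /negbTE]; rewrite eq_sym => ->.
  by rewrite big1 // => v vA; case: eqP xA => // ->; rewrite vA.
rewrite -!sum_eq -big_split; apply: eq_bigr => v _ /=.
rewrite /incident; case: (eqVneq (src e) v) => [<- | _] //=.
by rewrite (eq_sym (dst e)) (negbTE (src_dst e)).
Qed.

Lemma sum_degree_in F : \sum_v degree_in F v = 2 * #|F|.
Proof.
rewrite (eq_bigl (fun v => v \in [set: V])) => [|v]; last by rewrite inE.
rewrite handshake (eq_bigr (fun _ => 2)) => [|e _]; last by rewrite !inE.
by rewrite sum_nat_const mulnC.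
Qed.

Lemma degree_inT v : degree_in [set: E] v = 3.
Proof. by rewrite -(deg3 v); apply: eq_card => e; rewrite !inE. Qed.

Lemma adj_claw v a b c : adj v a -> adj v b -> adj v c ->
  a != b -> a != c -> b != c -> [|| adj a b, adj a c | adj b c].
Proof.
move=> va vb vc ab ac bc; apply/negPn/negP; rewrite !negb_or => /and3P [nab nac nbc].
apply: clawfree; exists v, a, b, c; split=> //.
pose join x := [set e | ((src e == v) && (dst e == x)) || ((src e == x) && (dst e == v))].
have join_gt0 x : adj v x -> 0 < #|join x|.
  by case/existsP => e He; apply/card_gt0P; exists e; rewrite inE.
have join_disj x w : x != w -> join x :&: join w = set0.
  move=> xw; apply/setP => e; rewrite !inE; apply/negbTE.
  by apply/negP => /andP [/orP [] /andP [/eqP s /eqP d] /orP [] /andP [/eqP s' /eqP d']];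
     apply: (elimN eqP xw); congruence.
have : #|join a :|: join b :|: join c| <= 3.
  have join_sub x : join x \subset [set e | incident e v].
    apply/subsetP => e; rewrite !inE /incident.
    by case/orP => /andP [/eqP -> /eqP ->]; rewrite eqxx ?orbT.
  by rewrite -(deg3 v); apply: subset_leq_card; rewrite !subUset !join_sub.
rewrite cardsU setIUl !join_disj // setU0 cards0 subn0 cardsU join_disj // cards0 subn0.
move: (join_gt0 a va) (join_gt0 b vb) (join_gt0 c vc).
by rewrite /edge_mult -/(join a) -/(join b) -/(join c) => *; split; lia.
Qed.

Lemma isolated_even A : isolated adj [set: V] A -> ~~ odd #|A|.
Proof.
move/isolatedP => iA.
have cut_free e : (dst e \in A) = (src e \in A).
  have edge_e : adj (src e) (dst e) by apply/existsP; exists e; rewrite !eqxx.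
  apply/idP/idP => [dA | sA]; apply/negPn/negP => nA.
  - by move: (iA _ (src e) dA); rewrite !inE nA adj_sym edge_e => /(_ isT).
  - by move: (iA _ (dst e) sA); rewrite !inE nA edge_e => /(_ isT).
have deg_sum : \sum_(v in A) degree_in [set: E] v = 3 * #|A|.
  rewrite (eq_bigr (fun=> 3)) => [|v _]; last exact: degree_inT.
  by rewrite sum_nat_const mulnC.
move: deg_sum; rewrite handshake; under eq_bigr do rewrite cut_free addnn.
have even_sum : ~~ odd (\sum_(e in [set: E]) (src e \in A).*2).
  by elim/big_rec: _ => // e m _; rewrite oddD odd_double.
by move/(congr1 odd); rewrite oddM /= => <-.
Qed.

Section InvolutionMatching.
Variable p : V -> V.
Hypothesis p_matching : matching_on adj [set: V] p.

Let joins v e := incident e v && incident e (p v).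

Let joins_neighbour u v e : joins u e -> incident e v -> v = u \/ v = p u.
Proof.
have [_ adj_up _] := p_matching (in_setT u).
have up : u <> p u by move=> h; move: adj_up; rewrite -h adj_irr.
have se : src e <> dst e by apply/eqP.
rewrite /joins /incident => /andP [/orP [] /eqP su /orP [] /eqP sp] /orP [] /eqP sv;
  first [by left; congruence | by right; congruence | by exfalso; congruence].
Qed.

Let joins_incident u v e : joins u e -> incident e v -> joins v =1 joins u.
Proof.
have [_ _ ppu] := p_matching (in_setT u).
move=> ju /(joins_neighbour ju) [] -> // f.
by rewrite /joins ppu andbC.
Qed.

(* [pick] depends only on the predicate, so v and p v pick the same edge. *)
Let mate v := [pick e | joins v e].

Let mate_joins u e : mate u = Some e -> joins u e.
Proof. by rewrite /mate; case: pickP => // f jf [<-]. Qed.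

Let mate_incident u v e : joins u e -> incident e v -> mate v = mate u.
Proof. by move=> ju iv; apply: eq_pick; apply: joins_incident iv. Qed.

Lemma perfect_matching_of_involution : exists M, forall v, degree_in M v = 1.
Proof.
exists [set e | mate (src e) == Some e] => v.
have [m mate_v jm] : exists2 m, mate v = Some m & joins v m.
  rewrite /mate; case: pickP => [m jm | none]; first by exists m.
  have [_ /existsP [e He] _] := p_matching (in_setT v).
  move: (none e); rewrite /joins /incident.
  by case/orP: He => /andP [/eqP -> /eqP ->]; rewrite !eqxx ?orbT.
have src_incident e : incident e (src e) by rewrite /incident eqxx.
rewrite /degree_in (_ : [set e in _ | _] = [set m]) ?cards1 //.
apply/setP => e; rewrite !inE; apply/andP/eqP => [[/eqP me ie] | ->].
  by move: mate_v; rewrite (mate_incident (mate_joins me) ie) me => -[].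
split; last by case/andP: jm.
by rewrite (mate_incident jm (src_incident m)) mate_v.
Qed.
End InvolutionMatching.

Lemma perfect_matching_exists : exists M, forall v, degree_in M v = 1.
Proof.
have [p pT] := sumner_matching adj_sym adj_irr adj_claw (S := [set: V])
  (fun A _ => @isolated_even A).
exact: perfect_matching_of_involution pT.
Qed.

Lemma degree_inC F v : degree_in F v + degree_in (~: F) v = 3.
Proof.
rewrite -(deg3 v) /degree -(cardsID F).
by congr (_ + _); apply: eq_card => e; rewrite !inE andbC.
Qed.

Lemma degree_inU1 F e v :
  e \notin F -> degree_in (e |: F) v = incident e v + degree_in F v.
Proof.
move=> eF; rewrite /degree_in; case: (boolP (incident e v)) => iev.
  have -> : [set g in e |: F | incident g v] = e |: [set g in F | incident g v].
    by apply/setP => g; rewrite !inE; case: eqP => // ->; rewrite iev.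
  by rewrite cardsU1 inE (negbTE eF).
rewrite add0n; apply: eq_card => g; rewrite !inE; case: eqP => // ->.
by rewrite (negbTE iev) !andbF.
Qed.

Lemma edges_adjacent_common e f :
  edges_adjacent src dst e f -> exists x, incident e x && incident f x.
Proof.
by case/andP => _ /orP [] ?; [exists (src e) | exists (dst e)]; rewrite /incident eqxx ?orbT.
Qed.

Lemma two_colorable_of_matching M F : (forall v, degree_in M v = 1) -> M \subset F ->
  (forall v, degree_in F v <= 2) -> k_edge_colorable src dst 2 F.
Proof.
move=> M1 MF F2; apply/existsP; exists [ffun e => if e \in M then ord0 else ord_max].
apply/forallP => e; apply/forallP => f; apply/implyP => /and3P [eF fF ef].
have [x /andP [ex fx]] := edges_adjacent_common ef.
have /cards1P [m Mx] := introT eqP (M1 x).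
have inMx g : g \in M -> incident g x -> g = m.
  by move=> gM gx; apply/set1P; rewrite -Mx inE gM.
have e_ne_f : e != f by case/andP: ef.
rewrite !ffunE; case: (boolP (e \in M)) => eM; case: (boolP (f \in M)) => fM //.
  by move: e_ne_f; rewrite (inMx e eM ex) (inMx f fM fx) eqxx.
have mMx : m \in [set g in M | incident g x] by rewrite Mx inE.
have /andP [mM mx] : (m \in M) && incident m x by move: mMx; rewrite inE.
have me : m != e by apply: contraNneq eM => <-.
have mf : m != f by apply: contraNneq fM => <-.
have : 3 <= degree_in F x.
  rewrite -(_ : #|m |: [set e; f]| = 3); last by rewrite cardsU1 cards2 !inE negb_or me mf e_ne_f.
  apply: subset_leq_card; apply/subsetP => g; rewrite !inE => /or3P [] /eqP ->.
  - by rewrite (subsetP MF) ?mx.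
  - by rewrite eF ex.
  - by rewrite fF fx.
by rewrite leqNgt ltnS F2.
Qed.

Definition saturated F := [set v | degree_in F v == 2].

Lemma saturated_endpoint F e : (forall v, degree_in F v <= 2) -> e \notin F ->
  ~~ [forall v, degree_in (e |: F) v <= 2] -> exists2 v, incident e v & v \in saturated F.
Proof.
move=> F2 eF /forallPn [v]; rewrite degree_inU1 // -ltnNge => over2.
exists v; first by apply: contraTT over2 => /negbTE ->; rewrite add0n -leqNgt F2.
by rewrite inE eqn_leq F2 /=; case: (incident e v) over2 => /=; lia.
Qed.

Lemma card_compl_le_saturated F :
  (forall e, e \notin F -> exists2 v, incident e v & v \in saturated F) ->
  #|~: F| <= #|saturated F|.
Proof.
move=> sat; rewrite -!sum1_card.
apply: (@leq_trans (\sum_(e in ~: F) ((src e \in saturated F) + (dst e \in saturated F)))).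
  apply: leq_sum => e; rewrite inE => /sat [v].
  by rewrite /incident => /orP [] /eqP -> ->; rewrite ?addn1.
rewrite -handshake; apply: leq_sum => v; rewrite inE => /eqP degF.
by have := degree_inC F v; rewrite degF; lia.
Qed.

Lemma card_saturated F : (forall v, 0 < degree_in F v <= 2) ->
  #|V| + #|saturated F| <= 2 * #|F|.
Proof.
move=> deg12; rewrite /saturated card_set_sum -sum_degree_in -sum1_card -big_split.
by apply: leq_sum => v _; have := deg12 v; case: (degree_in F v) => [|[|[|]]].
Qed.

Lemma card_edges_cubic : 2 * #|E| = 3 * #|V|.
Proof.
rewrite -cardsT -sum_degree_in (eq_bigr (fun=> 3)) => [|v _]; last exact: degree_inT.
by rewrite sum_nat_const mulnC.
Qed.
End CubicClawFree.

Theorem theorem8 (V E : finType) (src dst : E -> V) :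
  loopless src dst -> cubic src dst -> claw_free src dst ->
  5 * #|V| <= 6 * nu src dst 2.
Proof.
move=> src_dst deg3 clawfree.
have [M M1] := perfect_matching_exists src_dst deg3 clawfree.
pose extends_M (F : {set E}) := (M \subset F) && [forall v, degree_in src dst F v <= 2].
have extM : extends_M M by rewrite /extends_M subxx; apply/forallP => v; rewrite M1.
case: (arg_maxnP (fun F : {set E} => #|F|) extM) => F /andP [MF /forallP F2] Fmax.
have nuF : #|F| <= nu src dst 2.
  apply: (leq_bigmax_cond (F := fun F : {set E} => #|F|)).
  exact: two_colorable_of_matching M1 MF F2.
have F12 v : 0 < degree_in src dst F v <= 2.
  rewrite F2 andbT -(M1 v); apply: subset_leq_card.
  by apply/subsetP => e; rewrite !inE => /andP [/(subsetP MF) -> ->].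
have Fsat e : e \notin F -> exists2 v, incident src dst e v & v \in saturated src dst F.
  move=> eF; apply: saturated_endpoint => //; apply/negP => F2'.
  have := Fmax (e |: F); rewrite /extends_M F2' (subset_trans MF (subsetUr _ _)).
  by rewrite cardsU1 eF /= add1n ltnn => /(_ isT).
have nonF_le_sat := card_compl_le_saturated src_dst deg3 Fsat.
rewrite cardsCs setCK in nonF_le_sat.
have V_sat_le_F := card_saturated src_dst F12.
have E_V := card_edges_cubic src_dst deg3.
have F_E : #|F| <= #|E| := max_card F.
lia.
Qed.
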